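(* Let $K$ be a sequence with continuous leading block distribution under $\mathcal F$-expansion, with associated function $f_K^*$. Then there is a uniform continuation $f$ of $F$ such that $f_\infty^{-1}=f_K^*$ and $\{f^{-1}(K_n)\}$ is equidistributed.
   Context: $F$: $F_1=1,F_2=2,F_{n+2}=F_{n+1}+F_n$; $\phi$ golden ratio, $\omega=\phi^{-1}$. Zeckendorf expansion $m=\sum_{k=1}^M\epsilon(k)F_{M-k+1}$ (unique, $\epsilon(k)\in\{0,1\}$, $\epsilon(1)=1$, $\epsilon(k)\epsilon(k+1)=0$); $\mathrm{LB}_s(m)=(\epsilon(1),\dots,\epsilon(s))$ if $M\ge s$. Blocks of equal length are compared lexicographically. $\mathcal F^*$: infinite 0/1 sequences $\mu$ with $\mu(k)\mu(k+1)=0$ and no tail equal to $(1,0,1,0,\dots)$; $\mu|s=(\mu(1),\dots,\mu(s))$, $\mu\cdot\widehat F=\sum_{k\ge1}\mu(k)\omega^{k-1}$; $\mu\mapsto\phi(\mu\cdot\widehat F-1)$ is a bijection from $\{\mu\in\mathcal F^*:\mu(1)=1\}$ onto $(0,1)$. $K$ (positive integers, $K_n\to\infty$) has continuous leading block distribution under $\mathcal F$-expansion if: for every $s\ge2$ and leading block $\mathbf b$ of length $s$ the limit $\lim_n\#\{k\le n:\mathrm{LB}_s(K_k)=\mathbf b\}/n$ exists; for every $\mu\in\mathcal F^*$ with $\mu(1)=1$, $\lim_{s\to\infty}\lim_n\#\{k\le n:\mathrm{LB}_s(K_k)\le\mu|s\}/n$ exists; and $f_K^*:[0,1]\to[0,1]$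 defined by $f_K^*(0)=0$, $f_K^*(1)=1$, $f_K^*(\phi(\mu\cdot\widehat F-1))=$ that limit, is continuous and increasing. A uniform continuation of $F$ is an increasing continuous $f:[1,\infty)\to\mathbb{R}$ with $f(n)=F_n$ such that $f_n(p)=\frac{f(n+p)-f(n)}{f(n+1)-f(n)}$ converges uniformly on $[0,1]$ to an increasing continuous function $f_\infty$. $\{x_n\}$ equidistributed means $\lim_n\#\{k\le n:\{x_k\}\le\beta\}/n=\beta$ for all $\beta\in[0,1]$. *)

From Stdlib Require Import Reals Lra Lia List Bool Classical ClassicalDescription.
From Coquelicot Require Import Coquelicot.
Open Scope R_scope.

(* Fibonacci: fib n = F_n for n >= 1 (F_1 = 1, F_2 = 2); fib 0 = 1 is a dummy
   value consistent with the recurrence. *)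
Fixpoint fib (n : nat) : nat :=
  match n with
  | O => 1%nat
  | S m => match m with
           | O => 1%nat
           | S k => (fib m + fib k)%nat
           end
  end.

Definition phi : R := (1 + sqrt 5) / 2.
Definition omega : R := / phi.

Fixpoint nocons (e : list bool) : bool :=
  match e with
  | b1 :: ((b2 :: _) as t) => negb (b1 && b2) && nocons t
  | _ => true
  end.

(* value of (eps(1),...,eps(M)) : sum_k eps(k) F_{M-k+1} *)
Fixpoint zval (e : list bool) : nat :=
  match e with
  | nil => 0%nat
  | b :: t => ((if b then fib (S (length t)) else 0) + zval t)%nat
  end.

Definition is_zeck (m : nat) (e : list bool) : Prop :=
  hd false e = true /\ nocons e = true /\ zval e = m.

Definition LB (s m : nat) (b : list bool) : Prop :=
  exists e, is_zeck m e /\ (s <= length e)%nat /\ firstn s e = b.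

Definition leading_block (s : nat) (b : list bool) : Prop :=
  length b = s /\ hd false b = true /\ nocons b = true.

Fixpoint lex_le (a b : list bool) : bool :=
  match a, b with
  | nil, nil => true
  | x :: a', y :: b' =>
      match x, y with
      | false, true => true
      | true, false => false
      | _, _ => lex_le a' b'
      end
  | _, _ => false
  end.

(* ---- the space F* (sequences mu indexed from 0: mu i = mu(i+1) in the paper) ---- *)
Definition Fstar (mu : nat -> bool) : Prop :=
  (forall i, ~ (mu i = true /\ mu (S i) = true)) /\
  ~ (exists N, forall j, mu (N + 2 * j)%nat = true /\ mu (N + 2 * j + 1)%nat = false).

Definition restr (mu : nat -> bool) (s : nat) : list bool := map mu (seq 0 s).

Definition dotF (mu : nat -> bool) : R :=
  Series (fun i => if mu i then omega ^ i else 0).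

Fixpoint count_upto (P : nat -> Prop) (n : nat) : nat :=
  match n with
  | O => O
  | S m => (count_upto P m + (if excluded_middle_informative (P (S m)) then 1 else 0))%nat
  end.

Definition density_seq (P : nat -> Prop) : nat -> R :=
  fun n => INR (count_upto P n) / INR n.

Definition cont_on (A : R -> Prop) (h : R -> R) : Prop :=
  forall x, A x -> forall eps, 0 < eps ->
    exists delta, 0 < delta /\
      forall y, A y -> Rabs (y - x) < delta -> Rabs (h y - h x) < eps.

Definition strict_incr_on (A : R -> Prop) (h : R -> R) : Prop :=
  forall x y, A x -> A y -> x < y -> h x < h y.

Definition unit_int (x : R) : Prop := 0 <= x <= 1.

(* K_n indexed from n = 1 (K 0 is unused) *)
Definition pos_to_infty (K : nat -> nat) : Prop :=
  (forall n, (1 <= n)%nat -> (0 < K n)%nat) /\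
  (forall M, exists N, forall n, (N <= n)%nat -> (M <= K n)%nat).

(* K has continuous leading block distribution, and g is the associated f_K^* *)
Definition cont_LBD (K : nat -> nat) (g : R -> R) : Prop :=
  pos_to_infty K /\
  (forall s b, (2 <= s)%nat -> leading_block s b ->
     exists l, is_lim_seq (density_seq (fun k => LB s (K k) b)) (Finite l)) /\
  g 0 = 0 /\ g 1 = 1 /\
  (forall mu, Fstar mu -> mu 0%nat = true ->
     exists L : nat -> R,
       (forall s, is_lim_seq
          (density_seq (fun k => exists b, LB s (K k) b /\ lex_le b (restr mu s) = true))
          (Finite (L s))) /\
       is_lim_seq L (Finite (g (phi * (dotF mu - 1))))) /\
  cont_on unit_int g /\ strict_incr_on unit_int g.

Definition ge1 (x : R) : Prop := 1 <= x.

Definition fn (f : R -> R) (n : nat) (p : R) : R :=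
  (f (INR n + p) - f (INR n)) / (f (INR n + 1) - f (INR n)).

Definition uniform_continuation (f finf : R -> R) : Prop :=
  strict_incr_on ge1 f /\ cont_on ge1 f /\
  (forall n, (1 <= n)%nat -> f (INR n) = INR (fib n)) /\
  (forall eps, 0 < eps -> exists N, forall n p, (N <= n)%nat -> (1 <= n)%nat ->
      unit_int p -> Rabs (fn f n p - finf p) < eps) /\
  strict_incr_on unit_int finf /\ cont_on unit_int finf.

Definition equidistributed (x : nat -> R) : Prop :=
  forall beta, unit_int beta ->
    is_lim_seq (density_seq (fun k => frac_part (x k) <= beta)) (Finite beta).

(* Let [M] be the length of the Zeckendorf expansion of [K_k], so that [F_M <= K_k < F_(M+1)],
   and put [t_k = (K_k - F_M) / F_(M-1)], a number in [0, 1).  Every [alpha] in [0, 1] is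
   approximated from both sides by the numbers [phi (l . F^ - 1)] of finite blocks [l], and
   comparing the first [s] digits of [K_k] with such a block shows that [t_k <= alpha] has density
   [f_K^*(alpha)].  Let [h] be the inverse of [f_K^*] and [f (n + p) = F_n + (F_(n+1) - F_n) h(p)].
   Then [f_n = h] for all [n], and [f^-1(K_k) = M + f_K^*(t_k)] has fractional part at most
   [beta] exactly when [t_k <= h(beta)], an event of density [f_K^*(h(beta)) = beta]. *)

From Stdlib Require Import Reals Lra Lia ZArith List Bool.
From Stdlib Require Import ClassicalDescription IndefiniteDescription.
From Coquelicot Require Import Coquelicot.
Open Scope R_scope.

Lemma fib_SS n : fib (S (S n)) = (fib (S n) + fib n)%nat.
Proof. reflexivity. Qed.

Lemma fib_S n : (1 <= n)%nat -> fib (S n) = (fib n + fib (n - 1))%nat.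
Proof. intros Hn. destruct n as [|n]; [lia|]. now replace (S n - 1)%nat with n by lia. Qed.

Lemma fib_pos n : (1 <= fib n)%nat.
Proof.
  induction n as [n IH] using (well_founded_induction Wf_nat.lt_wf).
  destruct n as [|[|n]]; try (simpl; lia).
  rewrite fib_SS. specialize (IH (S n)). lia.
Qed.

Lemma fib_le_succ n : (fib n <= fib (S n))%nat.
Proof. destruct n; [simpl; lia|]. rewrite fib_SS. lia. Qed.

Lemma fib_le a b : (a <= b)%nat -> (fib a <= fib b)%nat.
Proof. induction 1; [lia|]. pose proof (fib_le_succ m). lia. Qed.

Lemma fib_lt_succ n : (1 <= n)%nat -> (fib n < fib (S n))%nat.
Proof. intros Hn. rewrite fib_S by lia. pose proof (fib_pos (n - 1)). lia. Qed.

Lemma INR_fib_ge1 n : 1 <= INR (fib n).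
Proof. apply (le_INR 1), fib_pos. Qed.

Lemma phi_sq : phi * phi = phi + 1.
Proof. unfold phi. pose proof (sqrt_sqrt 5 ltac:(lra)). nra. Qed.

Lemma phi_bounds : 3/2 < phi < 2.
Proof.
  assert (H2 : 2 < sqrt 5).
  { rewrite <- (sqrt_square 2) by lra. apply sqrt_lt_1; lra. }
  assert (H3 : sqrt 5 < 3).
  { rewrite <- (sqrt_square 3) by lra. apply sqrt_lt_1; lra. }
  unfold phi. lra.
Qed.

Lemma phi_omega : phi * omega = 1.
Proof. unfold omega. pose proof phi_bounds. field. lra. Qed.

Lemma omega_eq : omega = phi - 1.
Proof.
  pose proof phi_omega. pose proof phi_sq. pose proof phi_bounds.
  apply (Rmult_eq_reg_l phi); nra.
Qed.

Lemma omega_bounds : 0 < omega < 1.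
Proof. rewrite omega_eq. pose proof phi_bounds. lra. Qed.

Lemma fib_binet m : INR (fib (S m)) - phi * INR (fib m) = (1 - phi) ^ S m.
Proof.
  induction m as [|m IH]; [simpl; lra|].
  rewrite fib_SS, plus_INR, <- tech_pow_Rmult, <- IH.
  assert (H : phi * phi * INR (fib m) = (phi + 1) * INR (fib m)) by (rewrite phi_sq; ring).
  simpl. lra.
Qed.

Lemma fib_ratio_lim : is_lim_seq (fun m => INR (fib (S m)) / INR (fib m)) phi.
Proof.
  pose proof phi_bounds.
  set (q := Rabs (1 - phi)).
  assert (Hq : Rabs q < 1) by (unfold q; rewrite Rabs_Rabsolu, Rabs_left; lra).
  apply is_lim_seq_ext with (fun m => phi + (1 - phi) ^ S m / INR (fib m)).
  { intros m. rewrite <- fib_binet. pose proof (INR_fib_ge1 m). field. lra. }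
  rewrite <- (Rplus_0_r phi) at 1.
  apply is_lim_seq_plus'; [apply is_lim_seq_const|].
  apply is_lim_seq_le_le with (fun m => - q ^ S m) (fun m => q ^ S m).
  - intros m. pose proof (INR_fib_ge1 m).
    assert (Habs : Rabs ((1 - phi) ^ S m / INR (fib m)) <= q ^ S m).
    { unfold q. rewrite RPow_abs, Rabs_div, (Rabs_right (INR _)) by lra.
      pose proof (Rabs_pos ((1 - phi) ^ S m)).
      apply Rle_div_l; [lra|]. nra. }
    apply Rabs_le_between in Habs. lra.
  - replace (Finite 0) with (Rbar_opp 0) by (simpl; f_equal; lra).
    apply -> is_lim_seq_opp. apply (is_lim_seq_incr_1 (pow q)), is_lim_seq_geom, Hq.
  - apply (is_lim_seq_incr_1 (pow q)), is_lim_seq_geom, Hq.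
Qed.

Lemma fib_ratio_inv_lim : is_lim_seq (fun m => INR (fib m) / INR (fib (S m))) omega.
Proof.
  apply is_lim_seq_ext with (fun m => / (INR (fib (S m)) / INR (fib m))).
  { intros m. pose proof (INR_fib_ge1 m). pose proof (INR_fib_ge1 (S m)). field. lra. }
  apply (is_lim_seq_inv _ phi fib_ratio_lim).
  pose proof phi_bounds. intros E. injection E. lra.
Qed.

Lemma zval_zeros_app j e : zval (repeat false j ++ e) = zval e.
Proof. induction j; simpl; auto. Qed.

Lemma zval_zeros j : zval (repeat false j) = 0%nat.
Proof. rewrite <- (app_nil_r (repeat false j)), zval_zeros_app. reflexivity. Qed.

Lemma zval_app a c : zval (a ++ c) = (zval (a ++ repeat false (length c)) + zval c)%nat.
Proof.
  induction a as [|x a IH]; simpl.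
  - rewrite zval_zeros. lia.
  - rewrite !length_app, repeat_length, IH. lia.
Qed.

Lemma nocons_cons x t : nocons (x :: t) = negb (x && hd false t) && nocons t.
Proof. destruct t; simpl; auto. destruct x; reflexivity. Qed.

Lemma nocons_tail x t : nocons (x :: t) = true -> nocons t = true.
Proof. rewrite nocons_cons. intros H. apply andb_prop in H. tauto. Qed.

Lemma nocons_app_l a b : nocons (a ++ b) = true -> nocons a = true.
Proof.
  induction a as [|x a IH]; intros H; [reflexivity|].
  rewrite <- app_comm_cons, nocons_cons in H. apply andb_prop in H as [H1 H2].
  rewrite nocons_cons, (IH H2). destruct a; simpl in *; [destruct x|rewrite H1]; reflexivity.
Qed.

Lemma nocons_app_r a b : nocons (a ++ b) = true -> nocons b = true.
Proof. induction a as [|x a IH]; simpl; auto. intros H. apply IH, (nocons_tail x), H. Qed.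

Lemma nocons_zeros_app j e : nocons e = true -> nocons (repeat false j ++ e) = true.
Proof.
  induction j as [|j IH]; intros H; [exact H|].
  change (nocons (false :: (repeat false j ++ e)) = true). rewrite nocons_cons, (IH H). reflexivity.
Qed.

Lemma nocons_app_zeros a j : nocons a = true -> nocons (a ++ repeat false j) = true.
Proof.
  induction a as [|x a IH]; intros H.
  - rewrite app_nil_l, <- (app_nil_r (repeat false j)). apply nocons_zeros_app. reflexivity.
  - rewrite <- app_comm_cons, nocons_cons. rewrite nocons_cons in H.
    apply andb_prop in H as [H1 H2]. rewrite (IH H2).
    destruct a; [destruct j|]; simpl in *; rewrite ?H1, ?andb_true_r; auto; destruct x; reflexivity.
Qed.

Lemma zval_lt_fib e : nocons e = true -> (zval e < fib (S (length e)))%nat.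
Proof.
  induction e as [e IH] using (well_founded_induction (Wf_nat.well_founded_ltof _ (@length bool))).
  intros H. destruct e as [|[] t]; [simpl; lia| |].
  - destruct t as [|[] t']; [simpl; lia|discriminate|].
    assert (Ht' : nocons t' = true) by (apply (nocons_tail false), (nocons_tail true), H).
    specialize (IH t' ltac:(unfold Wf_nat.ltof; simpl; lia) Ht').
    cbn [zval length]. rewrite (fib_SS (S (length t'))). lia.
  - specialize (IH t ltac:(unfold Wf_nat.ltof; simpl; lia) (nocons_tail _ _ H)).
    pose proof (fib_le_succ (S (length t))). cbn [zval length]. lia.
Qed.

Lemma zeck_fib_bounds m e : is_zeck m e -> (fib (length e) <= m < fib (S (length e)))%nat.
Proof.
  intros [Hhd [Hnc Hz]]. subst m. split.
  - destruct e as [|x t]; [discriminate|]. simpl in Hhd. subst x. simpl. lia.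
  - apply zval_lt_fib, Hnc.
Qed.

Lemma fib_bracket_unique m a b :
  (fib a <= m < fib (S a))%nat -> (fib b <= m < fib (S b))%nat -> a = b.
Proof.
  intros Ha Hb. destruct (Nat.lt_trichotomy a b) as [H|[H|H]]; auto.
  - pose proof (fib_le (S a) b H). lia.
  - pose proof (fib_le (S b) a H). lia.
Qed.

Lemma fib_bracket_exists m : (1 <= m)%nat -> exists n, (1 <= n)%nat /\ (fib n <= m < fib (S n))%nat.
Proof.
  induction m as [|m IH]; intros Hm; [lia|].
  destruct m as [|m]; [exists 1%nat; simpl; lia|].
  destruct (IH ltac:(lia)) as [n [Hn1 Hn2]].
  destruct (Nat.eq_dec (S (S m)) (fib (S n))) as [E|E].
  - exists (S n). pose proof (fib_lt_succ (S n) ltac:(lia)). lia.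
  - exists n. lia.
Qed.

Lemma zeck_exists m : (1 <= m)%nat -> exists e, is_zeck m e.
Proof.
  induction m as [m IH] using (well_founded_induction Wf_nat.lt_wf). intros Hm.
  destruct (fib_bracket_exists m Hm) as [n [Hn1 Hn2]].
  rewrite fib_S in Hn2 by lia.
  destruct (Nat.eq_dec m (fib n)) as [E|E].
  - exists (true :: repeat false (n - 1)). split; [reflexivity|split].
    + rewrite nocons_cons, <- (app_nil_r (repeat false _)), nocons_zeros_app by reflexivity.
      destruct (n - 1)%nat; reflexivity.
    + cbn [zval length]. rewrite zval_zeros, repeat_length. replace (S (n - 1)) with n by lia. lia.
  - destruct (IH (m - fib n)%nat ltac:(pose proof (fib_pos n); lia) ltac:(lia)) as [e' He'].
    pose proof (zeck_fib_bounds _ _ He') as HL.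
    assert (HL2 : (length e' < n - 1)%nat).
    { destruct (Nat.lt_ge_cases (length e') (n - 1)) as [H|H]; auto.
      pose proof (fib_le (n - 1) (length e') H). lia. }
    destruct He' as [Ha [Hb Hc]].
    exists (true :: (repeat false (n - 1 - length e') ++ e')). split; [reflexivity|split].
    + rewrite nocons_cons, (nocons_zeros_app _ _ Hb).
      destruct (n - 1 - length e')%nat eqn:Q; [lia|reflexivity].
    + cbn [zval]. rewrite zval_zeros_app, length_app, repeat_length, Hc.
      replace (S (n - 1 - length e' + length e')) with n by lia. lia.
Qed.

Lemma lex_le_total a b : length a = length b -> lex_le a b = false -> lex_le b a = true.
Proof.
  revert b. induction a as [|x a IH]; intros [|y b] Hl H; simpl in *; try discriminate; try lia.
  destruct x, y; auto.
Qed.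

Definition zval_pad (b : list bool) (n : nat) : nat := zval (b ++ repeat false (n - length b)).

Lemma zval_pad_mono p q n : length p = length q -> nocons p = true -> lex_le p q = true ->
  (zval_pad p n <= zval_pad q n)%nat.
Proof.
  unfold zval_pad. intros Hl. rewrite <- Hl. generalize (n - length p)%nat as j.
  revert q Hl. induction p as [|x p IH]; intros [|y q] Hl j Hn H; try discriminate; [lia|].
  injection Hl as Hl. apply nocons_tail in Hn as Hn'.
  rewrite <- !app_comm_cons. cbn [zval lex_le] in *. rewrite !length_app, !repeat_length, Hl.
  destruct x, y; try discriminate.
  - specialize (IH q Hl j Hn' H). lia.
  - pose proof (zval_lt_fib (p ++ repeat false j) (nocons_app_zeros _ _ Hn')) as Hb.
    rewrite length_app, repeat_length, Hl in Hb. lia.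
  - specialize (IH q Hl j Hn' H). lia.
Qed.

Lemma zval_pad_cons x b m : (length b <= m)%nat ->
  zval_pad (x :: b) (S m) = ((if x then fib (S m) else 0) + zval_pad b m)%nat.
Proof.
  intros H. unfold zval_pad. rewrite <- app_comm_cons. cbn [zval length].
  rewrite length_app, repeat_length.
  replace (S m - S (length b))%nat with (m - length b)%nat by lia.
  replace (length b + (m - length b))%nat with m by lia. reflexivity.
Qed.

Lemma zval_pad_unit s n : (1 <= s <= n)%nat ->
  zval_pad (repeat false (s - 1) ++ true :: nil) n = fib (S (n - s)).
Proof.
  intros Hs. unfold zval_pad. rewrite length_app, repeat_length. simpl length.
  rewrite <- app_assoc, zval_zeros_app. cbn [app zval]. rewrite repeat_length, zval_zeros.
  replace (n - (s - 1 + 1))%nat with (n - s)%nat by lia. lia.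
Qed.

Lemma zeck_prefix_bounds m e s : is_zeck m e -> (s <= length e)%nat ->
  (zval_pad (firstn s e) (length e) <= m <
   zval_pad (firstn s e) (length e) + fib (S (length e - s)))%nat.
Proof.
  intros [_ [Hnc Hz]] Hs.
  assert (Hlen : length (firstn s e) = s) by (rewrite length_firstn; lia).
  rewrite <- (firstn_skipn s e), zval_app in Hz. rewrite <- (firstn_skipn s e) in Hnc.
  pose proof (zval_lt_fib _ (nocons_app_r _ _ Hnc)) as Hskip.
  unfold zval_pad. rewrite Hlen. rewrite length_skipn in Hz, Hskip. lia.
Qed.

Fixpoint wval (l : list bool) : R :=
  match l with nil => 0 | x :: t => (if x then 1 else 0) + omega * wval t end.

Lemma wval_app_zeros l j : wval (l ++ repeat false j) = wval l.
Proof.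
  induction l as [|x l IH]; simpl; [|rewrite IH; reflexivity].
  induction j as [|j IH]; simpl; [|rewrite IH]; ring.
Qed.

Lemma wval_unit s : wval (repeat false s ++ true :: nil) = omega ^ s.
Proof. induction s as [|s IH]; simpl in *; [|rewrite IH]; ring. Qed.

Lemma zval_pad_lim b : is_lim_seq (fun m => INR (zval_pad b (S m)) / INR (fib m)) (phi * wval b).
Proof.
  induction b as [|x b IH].
  - apply is_lim_seq_ext with (fun _ => 0).
    { intros m. unfold zval_pad. rewrite app_nil_l, zval_zeros. simpl. lra. }
    simpl. rewrite Rmult_0_r. apply is_lim_seq_const.
  - apply is_lim_seq_ext_loc with (fun m =>
      (if x then 1 else 0) * (INR (fib (S m)) / INR (fib m)) +
      INR (zval_pad b (S (pred m))) / INR (fib (pred m)) *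
      (INR (fib (pred m)) / INR (fib (S (pred m))))).
    { exists (S (length b)). intros [|m] Hm; [lia|]. simpl pred.
      rewrite zval_pad_cons, plus_INR by lia.
      pose proof (INR_fib_ge1 m). pose proof (INR_fib_ge1 (S m)).
      destruct x; [|change (INR 0) with 0]; field; lra. }
    replace (phi * wval (x :: b)) with ((if x then 1 else 0) * phi + phi * wval b * omega)
      by (simpl; ring).
    apply is_lim_seq_plus'.
    + apply is_lim_seq_mult'; [apply is_lim_seq_const|apply fib_ratio_lim].
    + apply (is_lim_seq_incr_1 (fun m => INR (zval_pad b (S (pred m))) / INR (fib (pred m)) *
        (INR (fib (pred m)) / INR (fib (S (pred m)))))).
      apply is_lim_seq_mult'; [apply IH|apply fib_ratio_inv_lim].
Qed.

Fixpoint greedy (r w : R) (N : nat) : list bool :=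
  match N with
  | O => nil
  | S N' => if Rle_dec w r then true :: greedy (r - w) (w * omega) N'
            else false :: greedy r (w * omega) N'
  end.

(* A digit 1 taken greedily leaves a remainder [r - w < w (phi - 1) = w omega], so the next digit
   is 0. *)
Lemma greedy_spec N : forall r w, 0 < w -> 0 <= r < w * phi ->
  nocons (greedy r w N) = true /\ (r < w -> hd false (greedy r w N) = false) /\
  0 <= r - w * wval (greedy r w N) < w * phi * omega ^ N.
Proof.
  pose proof phi_omega as Hpo. pose proof omega_eq as Hoe.
  pose proof omega_bounds as Hob. pose proof phi_bounds as Hpb.
  induction N as [|N IH]; intros r w Hw Hr; simpl greedy; [simpl; lra|].
  assert (Hw' : 0 < w * omega) by nra.
  destruct (Rle_dec w r) as [Hle|Hlt].
  - destruct (IH (r - w) (w * omega) Hw' ltac:(nra)) as [H1 [H2 H3]].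
    specialize (H2 ltac:(nra)).
    repeat split; [rewrite nocons_cons, H2, H1; reflexivity|intros; lra|simpl; nra..].
  - destruct (IH r (w * omega) Hw' ltac:(nra)) as [H1 [H2 H3]].
    repeat split; [rewrite nocons_cons, H1; reflexivity|simpl; nra..].
Qed.

(* [phi (wval (1 :: 0 :: d) - 1) = omega * wval d], so the greedy digits [d] of [c * omega]
   (weights starting at [omega^2]) approximate the midpoint [c] of [(a, b)] from below. *)
Lemma leading_block_between a b : 0 <= a < b -> b <= 1 ->
  exists l, hd false l = true /\ nocons l = true /\ a < phi * (wval l - 1) < b.
Proof.
  intros Hab Hb1.
  pose proof phi_omega as Hpo. pose proof omega_bounds as Hob. pose proof phi_bounds as Hpb.
  set (c := (a + b) / 2). set (eta := (b - a) / 2).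
  destruct (pow_lt_1_zero omega ltac:(rewrite Rabs_right; lra) eta ltac:(unfold eta; lra))
    as [N HN].
  specialize (HN N (Nat.le_refl N)). rewrite Rabs_right in HN by (apply Rle_ge, pow_le; lra).
  destruct (greedy_spec N (c * omega) (omega * omega) ltac:(nra) ltac:(unfold c; split; nra))
    as [H1 [_ H3]].
  exists (true :: false :: greedy (c * omega) (omega * omega) N).
  split; [reflexivity|split; [rewrite !nocons_cons, H1; reflexivity|]].
  set (G := wval (greedy (c * omega) (omega * omega) N)) in *.
  assert (E : c - phi * (wval (true :: false :: greedy (c * omega) (omega * omega) N) - 1)
              = phi * (c * omega - omega * omega * G)).
  { simpl wval. fold G.
    replace c with (c * (phi * omega)) at 1 by (rewrite phi_omega; ring). ring. }
  assert (Epow : phi * (omega * omega * phi * omega ^ N) = omega ^ N).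
  { replace (phi * (omega * omega * phi * omega ^ N))
      with ((phi * omega) * (phi * omega) * omega ^ N) by ring.
    rewrite phi_omega. ring. }
  unfold c, eta in *. nra.
Qed.

Definition pad_seq (l : list bool) (i : nat) : bool := nth i l false.

Lemma pad_seq_Fstar l : nocons l = true -> Fstar (pad_seq l).
Proof.
  intros Hl. split.
  - unfold pad_seq. induction l as [|x t IH]; intros i [H1 H2]; [destruct i; discriminate|].
    rewrite nocons_cons in Hl. apply andb_prop in Hl as [Ha Hb].
    destruct i as [|i]; [|exact (IH Hb i (conj H1 H2))].
    simpl in H1, H2. subst x. destruct t; [discriminate|]. simpl in *. subst. discriminate.
  - intros [N HN]. destruct (HN (length l)) as [H1 _]. unfold pad_seq in H1.
    rewrite nth_overflow in H1 by lia. discriminate.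
Qed.

Lemma restr_pad_seq l s : (length l <= s)%nat ->
  restr (pad_seq l) s = l ++ repeat false (s - length l).
Proof.
  intros Hs. unfold restr, pad_seq. apply nth_ext with false false.
  { rewrite length_map, length_seq, length_app, repeat_length. lia. }
  intros i Hi. rewrite length_map, length_seq in Hi.
  rewrite (nth_indep _ false (nth 0 l false)) by (rewrite length_map, length_seq; lia).
  rewrite (map_nth (fun i0 => nth i0 l false)), seq_nth by lia. simpl.
  destruct (Nat.lt_ge_cases i (length l)).
  - rewrite app_nth1; auto.
  - rewrite app_nth2, nth_repeat by auto. apply nth_overflow; auto.
Qed.

Lemma is_series_zero : is_series (fun _ : nat => 0) 0.
Proof.
  apply is_series_Reals. intros eps He. exists 0%nat. intros n _.
  rewrite sum_cte. unfold R_dist. rewrite Rmult_0_l, Rminus_0_r, Rabs_R0. exact He.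
Qed.

Lemma dotF_pad_seq l : dotF (pad_seq l) = wval l.
Proof.
  unfold dotF. apply is_series_unique. unfold pad_seq.
  induction l as [|x t IH].
  - eapply is_series_ext; [|apply is_series_zero]. intros [|n]; reflexivity.
  - apply is_series_decr_1.
    match goal with |- is_series _ ?L => replace L with (omega * wval t) end.
    + apply is_series_ext with (fun k => omega * (if nth k t false then omega ^ k else 0)).
      { intros k. simpl. destruct (nth k t false); ring. }
      apply (is_series_scal_l omega _ _ IH).
    + unfold plus, opp; simpl. destruct x; ring.
Qed.

Lemma is_lim_seq_eventually_lt (u : nat -> R) (l c : R) : is_lim_seq u l -> l < c ->
  exists N, forall n, (N <= n)%nat -> u n < c.
Proof.
  intros Hu Hc. apply is_lim_seq_spec in Hu. destruct (Hu (mkposreal (c - l) ltac:(lra))) as [N HN].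
  exists N. intros n Hn. specialize (HN n Hn). apply Rabs_lt_between in HN. simpl in HN. lra.
Qed.

Lemma is_lim_seq_eventually_gt (u : nat -> R) (l c : R) : is_lim_seq u l -> c < l ->
  exists N, forall n, (N <= n)%nat -> c < u n.
Proof.
  intros Hu Hc. apply is_lim_seq_spec in Hu. destruct (Hu (mkposreal (l - c) ltac:(lra))) as [N HN].
  exists N. intros n Hn. specialize (HN n Hn). apply Rabs_lt_between in HN. simpl in HN. lra.
Qed.

Lemma is_lim_seq_of_bounds (u : nat -> R) (l : R) :
  (forall eps, 0 < eps -> exists N, forall n, (N <= n)%nat -> u n < l + eps) ->
  (forall eps, 0 < eps -> exists N, forall n, (N <= n)%nat -> l - eps < u n) ->
  is_lim_seq u l.
Proof.
  intros Hup Hlow. apply is_lim_seq_spec. intros [eps He].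
  destruct (Hup eps He) as [N1 HN1], (Hlow eps He) as [N2 HN2].
  exists (max N1 N2). intros n Hn. apply Rabs_lt_between.
  specialize (HN1 n ltac:(lia)). specialize (HN2 n ltac:(lia)). simpl. lra.
Qed.

Lemma count_upto_le (P : nat -> Prop) n : (count_upto P n <= n)%nat.
Proof.
  induction n as [|n IH]; simpl; [lia|].
  destruct (excluded_middle_informative (P (S n))); lia.
Qed.

Lemma count_upto_ext (P Q : nat -> Prop) n : (forall k, (1 <= k)%nat -> (P k <-> Q k)) ->
  count_upto P n = count_upto Q n.
Proof.
  intros H. induction n as [|n IH]; [reflexivity|]. simpl. rewrite IH.
  specialize (H (S n) ltac:(lia)).
  destruct (excluded_middle_informative (P (S n))), (excluded_middle_informative (Q (S n)));
    tauto.
Qed.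

Lemma count_upto_impl (P Q : nat -> Prop) N0 n : (forall k, (N0 <= k)%nat -> P k -> Q k) ->
  (count_upto P n <= count_upto Q n + N0)%nat.
Proof.
  intros H. induction n as [|n IH]; simpl; [lia|].
  destruct (Nat.le_gt_cases N0 (S n)) as [HN|HN].
  - destruct (excluded_middle_informative (P (S n))) as [A|A],
      (excluded_middle_informative (Q (S n))) as [B|B]; try lia.
    exfalso. apply B, H; auto.
  - pose proof (count_upto_le P (S n)) as Hle. simpl in Hle.
    destruct (excluded_middle_informative (P (S n))),
      (excluded_middle_informative (Q (S n))); lia.
Qed.

Lemma density_seq_bounds (P : nat -> Prop) n : 0 <= density_seq P n <= 1.
Proof.
  unfold density_seq. destruct n as [|n]; [simpl; unfold Rdiv; rewrite Rmult_0_l; lra|].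
  pose proof (le_INR _ _ (count_upto_le P (S n))). pose proof (pos_INR (count_upto P (S n))).
  pose proof (lt_0_INR (S n) ltac:(lia)).
  split; [apply Rdiv_le_0_compat; lra|apply Rle_div_l; lra].
Qed.

Lemma density_seq_le_impl (P Q : nat -> Prop) N0 n :
  (forall k, (N0 <= k)%nat -> P k -> Q k) -> (1 <= n)%nat ->
  density_seq P n <= density_seq Q n + INR N0 / INR n.
Proof.
  intros H Hn. unfold density_seq. pose proof (lt_0_INR n ltac:(lia)).
  pose proof (le_INR _ _ (count_upto_impl P Q N0 n H)) as Hc. rewrite plus_INR in Hc.
  rewrite <- Rdiv_plus_distr. apply Rmult_le_compat_r; [left; apply Rinv_0_lt_compat|]; lra.
Qed.

Lemma is_lim_seq_const_div_INR (c : R) : is_lim_seq (fun n => c / INR n) 0.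
Proof.
  replace 0 with (c * 0) by ring. apply is_lim_seq_mult'; [apply is_lim_seq_const|].
  replace (Finite 0) with (Rbar_inv p_infty) by reflexivity.
  apply is_lim_seq_inv; [apply is_lim_seq_INR|discriminate].
Qed.

Lemma density_seq_upper_impl (P Q : nat -> Prop) N0 (lQ : R) :
  (forall k, (N0 <= k)%nat -> P k -> Q k) -> is_lim_seq (density_seq Q) lQ ->
  forall eps, 0 < eps -> exists N, forall n, (N <= n)%nat -> density_seq P n < lQ + eps.
Proof.
  intros H HQ eps He.
  assert (Hl : is_lim_seq (fun n => density_seq Q n + INR N0 / INR n) (lQ + 0)).
  { apply is_lim_seq_plus'; [exact HQ|apply is_lim_seq_const_div_INR]. }
  destruct (is_lim_seq_eventually_lt _ _ (lQ + eps) Hl ltac:(lra)) as [N HN].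
  exists (S N). intros n Hn. specialize (HN n ltac:(lia)).
  pose proof (density_seq_le_impl P Q N0 n H ltac:(lia)). lra.
Qed.

Lemma density_seq_lower_impl (P Q : nat -> Prop) N0 (lQ : R) :
  (forall k, (N0 <= k)%nat -> Q k -> P k) -> is_lim_seq (density_seq Q) lQ ->
  forall eps, 0 < eps -> exists N, forall n, (N <= n)%nat -> lQ - eps < density_seq P n.
Proof.
  intros H HQ eps He.
  assert (Hl : is_lim_seq (fun n => density_seq Q n - INR N0 / INR n) (lQ - 0)).
  { apply is_lim_seq_minus'; [exact HQ|apply is_lim_seq_const_div_INR]. }
  destruct (is_lim_seq_eventually_gt _ _ (lQ - eps) Hl ltac:(lra)) as [N HN].
  exists (S N). intros n Hn. specialize (HN n ltac:(lia)).
  pose proof (density_seq_le_impl Q P N0 n H ltac:(lia)). lra.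
Qed.

Lemma Int_part_INR_plus m y : 0 <= y < 1 -> Int_part (INR m + y) = Z.of_nat m.
Proof.
  intros H. symmetry. apply (Int_part_frac_part_spec (INR m + y) (Z.of_nat m) y H).
  rewrite INR_IZR_INZ. reflexivity.
Qed.

Lemma frac_part_INR_plus m y : 0 <= y < 1 -> frac_part (INR m + y) = y.
Proof.
  intros H. symmetry. apply (Int_part_frac_part_spec (INR m + y) (Z.of_nat m) y H).
  rewrite INR_IZR_INZ. reflexivity.
Qed.

Definition clamp (x : R) : R := Rmax 0 (Rmin 1 x).

Lemma clamp_unit x : unit_int (clamp x).
Proof. unfold clamp, unit_int, Rmax, Rmin. repeat destruct Rle_dec; lra. Qed.

Lemma clamp_id x : unit_int x -> clamp x = x.
Proof. unfold clamp, unit_int, Rmax, Rmin. intros. repeat destruct Rle_dec; lra. Qed.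

Lemma clamp_lipschitz x y : Rabs (clamp y - clamp x) <= Rabs (y - x).
Proof.
  unfold clamp, Rmax, Rmin. repeat destruct Rle_dec; unfold Rabs; repeat destruct Rcase_abs; lra.
Qed.

Section IncreasingBijection.

Variable g : R -> R.
Hypothesis g0 : g 0 = 0.
Hypothesis g1 : g 1 = 1.
Hypothesis g_cont : cont_on unit_int g.
Hypothesis g_incr : strict_incr_on unit_int g.

Lemma incr_lt_iff x y : unit_int x -> unit_int y -> (g x < g y <-> x < y).
Proof.
  intros Hx Hy. split; [|apply g_incr; auto].
  intros H. destruct (Rlt_or_le x y) as [|Hyx]; auto.
  destruct (Req_dec y x) as [E|E]; [subst; lra|].
  pose proof (g_incr y x Hy Hx ltac:(lra)). lra.
Qed.

Lemma incr_le_iff x y : unit_int x -> unit_int y -> (g x <= g y <-> x <= y).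
Proof.
  intros Hx Hy. pose proof (incr_lt_iff y x Hy Hx) as Hlt.
  split; intros H; apply Rnot_lt_le; intros C; apply Rle_not_lt in H; tauto.
Qed.

Lemma incr_unit x : unit_int x -> unit_int (g x).
Proof.
  intros Hx. unfold unit_int. rewrite <- g0, <- g1.
  split; apply incr_le_iff; unfold unit_int in *; lra.
Qed.

Lemma incr_unit_lt1 x : 0 <= x < 1 -> 0 <= g x < 1.
Proof.
  intros Hx. pose proof (incr_unit x ltac:(unfold unit_int; lra)) as [Hx0 _].
  rewrite <- g1. split; [exact Hx0|apply g_incr; unfold unit_int; lra].
Qed.

(* [IVT_gen] needs continuity on all of [R], hence the extension [g o clamp]. *)
Lemma incr_onto y : unit_int y -> exists x, unit_int x /\ g x = y.
Proof.
  intros Hy. set (G := fun x => g (clamp x)).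
  assert (HG : continuity G).
  { intros x eps He. destruct (g_cont (clamp x) (clamp_unit x) eps He) as [d [Hd Hc]].
    exists d. split; [lra|]. intros z [_ Hz]. simpl in *. unfold R_dist in *.
    apply Hc; [apply clamp_unit|]. pose proof (clamp_lipschitz x z). lra. }
  assert (HG0 : G 0 = 0) by (unfold G; rewrite clamp_id; [auto|unfold unit_int; lra]).
  assert (HG1 : G 1 = 1) by (unfold G; rewrite clamp_id; [auto|unfold unit_int; lra]).
  destruct (IVT_gen G 0 1 y HG) as [x [Hx1 Hx2]].
  { rewrite HG0, HG1, Rmin_left, Rmax_right by lra. exact Hy. }
  rewrite Rmin_left, Rmax_right in Hx1 by lra.
  exists x. split; [exact Hx1|]. unfold G in Hx2. rewrite clamp_id in Hx2; auto.
Qed.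

Lemma incr_inverse_exists : exists h, forall y, unit_int y -> unit_int (h y) /\ g (h y) = y.
Proof.
  apply (functional_choice (fun y x => unit_int y -> unit_int x /\ g x = y)).
  intros y. destruct (classic (unit_int y)) as [Hy|Hy].
  - destruct (incr_onto y Hy) as [x Hx]. exists x. auto.
  - exists 0. tauto.
Qed.

Variable h : R -> R.
Hypothesis h_inv : forall y, unit_int y -> unit_int (h y) /\ g (h y) = y.

Lemma inverse_lt_iff y b : unit_int y -> unit_int b -> (h y < b <-> y < g b).
Proof.
  intros Hy Hb. destruct (h_inv y Hy) as [Hu He].
  rewrite <- (incr_lt_iff (h y) b), He by auto. reflexivity.
Qed.

Lemma inverse_gt_iff y a : unit_int y -> unit_int a -> (a < h y <-> g a < y).
Proof.
  intros Hy Ha. destruct (h_inv y Hy) as [Hu He].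
  rewrite <- (incr_lt_iff a (h y)), He by auto. reflexivity.
Qed.

Lemma inverse_of_incr x : unit_int x -> h (g x) = x.
Proof.
  intros Hx. pose proof (incr_unit x Hx) as Hgx. destruct (h_inv _ Hgx) as [Hu He].
  apply Rle_antisym; apply incr_le_iff; auto; lra.
Qed.

Lemma inverse_0 : h 0 = 0.
Proof. rewrite <- g0 at 1. apply inverse_of_incr. unfold unit_int. lra. Qed.

Lemma inverse_1 : h 1 = 1.
Proof. rewrite <- g1 at 1. apply inverse_of_incr. unfold unit_int. lra. Qed.

Lemma inverse_incr : strict_incr_on unit_int h.
Proof.
  intros y1 y2 Hy1 Hy2 Hlt. destruct (h_inv y2 Hy2) as [Hu He].
  apply inverse_lt_iff; auto. rewrite He. exact Hlt.
Qed.

Lemma inverse_cont_right y eps : unit_int y -> 0 < eps ->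
  exists d, 0 < d /\ forall y', unit_int y' -> y' < y + d -> h y' < h y + eps.
Proof.
  intros Hy He. destruct (h_inv y Hy) as [Hu _].
  set (b := Rmin 1 (h y + eps / 2)).
  assert (Hb : unit_int b) by (unfold b, unit_int, Rmin in *; destruct Rle_dec; lra).
  destruct (Rlt_dec (h y) b) as [Hlt|Hge].
  - apply (inverse_lt_iff y b Hy Hb) in Hlt.
    exists (g b - y). split; [lra|]. intros y' Hy' Hyy'.
    pose proof (proj2 (inverse_lt_iff y' b Hy' Hb) ltac:(lra)).
    assert (b <= h y + eps / 2) by apply Rmin_r. lra.
  - exists 1. split; [lra|]. intros y' Hy' _. destruct (h_inv y' Hy') as [Hu' _].
    unfold b, unit_int, Rmin in *. destruct Rle_dec; lra.
Qed.

Lemma inverse_cont_left y eps : unit_int y -> 0 < eps ->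
  exists d, 0 < d /\ forall y', unit_int y' -> y - d < y' -> h y - eps < h y'.
Proof.
  intros Hy He. destruct (h_inv y Hy) as [Hu _].
  set (a := Rmax 0 (h y - eps / 2)).
  assert (Ha : unit_int a) by (unfold a, unit_int, Rmax in *; destruct Rle_dec; lra).
  destruct (Rlt_dec a (h y)) as [Hlt|Hge].
  - apply (inverse_gt_iff y a Hy Ha) in Hlt.
    exists (y - g a). split; [lra|]. intros y' Hy' Hyy'.
    pose proof (proj2 (inverse_gt_iff y' a Hy' Ha) ltac:(lra)).
    assert (h y - eps / 2 <= a) by apply Rmax_r. lra.
  - exists 1. split; [lra|]. intros y' Hy' _. destruct (h_inv y' Hy') as [Hu' _].
    unfold a, unit_int, Rmax in *. destruct Rle_dec; lra.
Qed.

Lemma inverse_cont : cont_on unit_int h.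
Proof.
  intros y Hy eps He.
  destruct (inverse_cont_right y eps Hy He) as [dR [HdR HR]].
  destruct (inverse_cont_left y eps Hy He) as [dL [HdL HL]].
  exists (Rmin dR dL). split; [apply Rmin_pos; auto|].
  intros y' Hy' Hd. apply Rabs_lt_between in Hd.
  pose proof (Rmin_l dR dL). pose proof (Rmin_r dR dL).
  specialize (HR y' Hy' ltac:(lra)). specialize (HL y' Hy' ltac:(lra)).
  apply Rabs_lt_between. lra.
Qed.
End IncreasingBijection.

Lemma zeck_length_exists (K : nat -> nat) : (forall k, (1 <= k)%nat -> (0 < K k)%nat) ->
  exists M : nat -> nat,
    forall k, (1 <= k)%nat -> (1 <= M k)%nat /\ (fib (M k) <= K k < fib (S (M k)))%nat.
Proof.
  intros HK. apply (functional_choice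
    (fun k n => (1 <= k)%nat -> (1 <= n)%nat /\ (fib n <= K k < fib (S n))%nat)).
  intros k. destruct (le_lt_dec 1 k) as [Hk|Hk]; [|exists 0%nat; lia].
  destruct (fib_bracket_exists (K k) (HK k Hk)) as [n Hn]. exists n. auto.
Qed.

(* Affine map sending [F_M, F_(M+1)) onto [0, 1), as [F_(M+1) - F_M = F_(M-1)]. *)
Definition zeck_coord (M : nat) (x : R) : R := (x - INR (fib M)) / INR (fib (M - 1)).

Lemma zeck_coord_le M x y : x <= y -> zeck_coord M x <= zeck_coord M y.
Proof.
  intros H. pose proof (INR_fib_ge1 (M - 1)). unfold zeck_coord.
  apply Rmult_le_compat_r; [left; apply Rinv_0_lt_compat|]; lra.
Qed.

Lemma zeck_coord_unit M m : (1 <= M)%nat -> (fib M <= m < fib (S M))%nat ->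
  0 <= zeck_coord M (INR m) < 1.
Proof.
  intros HM [H1 H2]. rewrite fib_S in H2 by lia.
  apply le_INR in H1. apply lt_INR in H2. rewrite plus_INR in H2.
  pose proof (INR_fib_ge1 (M - 1)). unfold zeck_coord.
  split; [apply Rdiv_le_0_compat|apply Rlt_div_l]; lra.
Qed.

Lemma zeck_coord_inv M x : INR (fib M) + INR (fib (M - 1)) * zeck_coord M x = x.
Proof. pose proof (INR_fib_ge1 (M - 1)). unfold zeck_coord. field. lra. Qed.

Lemma zeck_coord_lim (x : nat -> R) (a : R) : is_lim_seq (fun m => x m / INR (fib m)) a ->
  is_lim_seq (fun m => zeck_coord (S m) (x m)) (a - phi).
Proof.
  intros Hx. apply is_lim_seq_ext with (fun m => x m / INR (fib m) - INR (fib (S m)) / INR (fib m)).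
  { intros m. pose proof (INR_fib_ge1 m). unfold zeck_coord. simpl (S m - 1)%nat.
    rewrite Nat.sub_0_r. field. lra. }
  apply is_lim_seq_minus'; [exact Hx|apply fib_ratio_lim].
Qed.

Definition lb_le (mu : nat -> bool) (s m : nat) : Prop :=
  exists b, LB s m b /\ lex_le b (restr mu s) = true.

Section LeadingBlocks.

Variables K M : nat -> nat.
Hypothesis K_unbounded : forall N, exists k0, forall k, (k0 <= k)%nat -> (N <= K k)%nat.
Hypothesis M_bracket :
  forall k, (1 <= k)%nat -> (1 <= M k)%nat /\ (fib (M k) <= K k < fib (S (M k)))%nat.

Let t k := zeck_coord (M k) (INR (K k)).

Lemma M_eventually_ge L : exists k0, forall k, (k0 <= k)%nat -> (1 <= k)%nat /\ (L <= M k)%nat.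
Proof.
  destruct (K_unbounded (fib L)) as [k0 Hk0]. exists (max k0 1). intros k Hk.
  specialize (Hk0 k ltac:(lia)). destruct (M_bracket k ltac:(lia)) as [_ [_ HK]].
  split; [lia|]. destruct (Nat.le_gt_cases L (M k)) as [|HL]; auto.
  pose proof (fib_le (S (M k)) L HL). lia.
Qed.

Lemma zeck_length k e : (1 <= k)%nat -> is_zeck (K k) e -> length e = M k.
Proof.
  intros Hk He. apply (fib_bracket_unique (K k)); [apply zeck_fib_bounds, He|apply M_bracket, Hk].
Qed.

(* If the first [s] digits of [K_k] exceeded [l] padded with zeros, then [K_k >= zval_pad l M],
   whose coordinate tends to [phi (wval l - 1) > alpha]. *)
Lemma lb_le_of_coord_le l s alpha : nocons l = true -> (length l <= s)%nat ->
  alpha < phi * (wval l - 1) ->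
  exists k0, forall k, (k0 <= k)%nat -> t k <= alpha -> lb_le (pad_seq l) s (K k).
Proof.
  intros Hl Hls Ha.
  set (b := restr (pad_seq l) s).
  assert (Hb : b = l ++ repeat false (s - length l)) by (apply restr_pad_seq, Hls).
  assert (Hlb : length b = s) by (unfold b, restr; rewrite length_map, length_seq; reflexivity).
  assert (Hnb : nocons b = true) by (rewrite Hb; apply nocons_app_zeros, Hl).
  pose proof (zeck_coord_lim _ _ (zval_pad_lim b)) as Hlim.
  replace (wval b) with (wval l) in Hlim by (rewrite Hb; symmetry; apply wval_app_zeros).
  destruct (is_lim_seq_eventually_gt _ _ alpha Hlim ltac:(lra)) as [m0 Hm0].
  destruct (M_eventually_ge (S m0 + s)) as [k0 Hk0].
  exists k0. intros k Hk Ht. destruct (Hk0 k Hk) as [Hk1 HMk].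
  destruct (zeck_exists (K k)) as [e He];
    [pose proof (fib_pos (M k)); apply M_bracket in Hk1; lia|].
  pose proof (zeck_length k e Hk1 He) as Hlen.
  exists (firstn s e). split; [exists e; split; [exact He|split; [lia|reflexivity]]|].
  fold b. destruct (lex_le (firstn s e) b) eqn:E; [reflexivity|exfalso].
  assert (Hlf : length (firstn s e) = s) by (rewrite length_firstn; lia).
  apply lex_le_total in E; [|congruence].
  pose proof (zval_pad_mono b (firstn s e) (length e) ltac:(congruence) Hnb E) as Hmono.
  pose proof (zeck_prefix_bounds (K k) e s He ltac:(lia)) as [Hpre _].
  destruct (M k) as [|m] eqn:EM; [lia|].
  specialize (Hm0 m ltac:(lia)). rewrite Hlen in Hmono, Hpre.
  pose proof (zeck_coord_le (S m) _ _ (le_INR _ _ (Nat.le_trans _ _ _ Hmono Hpre))).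
  unfold t in Ht. rewrite EM in Ht. lra.
Qed.

(* Here [K_k < zval_pad l M + F_(M-s+1)]; the last term is [zval_pad (0...01) M], which
   contributes [phi omega^(s-1)] to the coordinate in the limit. *)
Lemma coord_le_of_lb_le l s alpha : nocons l = true -> (length l <= s)%nat -> (1 <= s)%nat ->
  phi * (wval l - 1) + phi * omega ^ (s - 1) < alpha ->
  exists k0, forall k, (k0 <= k)%nat -> lb_le (pad_seq l) s (K k) -> t k <= alpha.
Proof.
  intros Hl Hls Hs1 Ha.
  set (b := restr (pad_seq l) s).
  set (c := repeat false (s - 1) ++ true :: nil).
  assert (Hb : b = l ++ repeat false (s - length l)) by (apply restr_pad_seq, Hls).
  assert (Hlb : length b = s) by (unfold b, restr; rewrite length_map, length_seq; reflexivity).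
  assert (Hlim : is_lim_seq
                   (fun m => zeck_coord (S m) (INR (zval_pad b (S m)) + INR (zval_pad c (S m))))
                   (phi * wval l + phi * omega ^ (s - 1) - phi)).
  { apply zeck_coord_lim.
    apply is_lim_seq_ext with
      (fun m => INR (zval_pad b (S m)) / INR (fib m) + INR (zval_pad c (S m)) / INR (fib m)).
    { intros m. unfold Rdiv. ring. }
    rewrite <- (wval_app_zeros l (s - length l)), <- Hb, <- wval_unit.
    apply is_lim_seq_plus'; apply zval_pad_lim. }
  destruct (is_lim_seq_eventually_lt _ _ alpha Hlim ltac:(lra)) as [m0 Hm0].
  destruct (M_eventually_ge (S m0 + s)) as [k0 Hk0].
  exists k0. intros k Hk [b' [[e [He [Hse Hb']]] Hlex]]. destruct (Hk0 k Hk) as [Hk1 HMk].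
  pose proof (zeck_length k e Hk1 He) as Hlen.
  assert (Hnb' : nocons b' = true).
  { destruct He as [_ [Hnc _]]. rewrite <- (firstn_skipn s e), Hb' in Hnc.
    apply (nocons_app_l _ _ Hnc). }
  assert (Hlb' : length b' = s) by (rewrite <- Hb', length_firstn; lia).
  pose proof (zval_pad_mono b' b (length e) ltac:(congruence) Hnb' Hlex) as Hmono.
  pose proof (zeck_prefix_bounds (K k) e s He Hse) as [_ Hpre]. rewrite Hb' in Hpre.
  rewrite Hlen in Hmono, Hpre. destruct (M k) as [|m] eqn:EM; [lia|].
  rewrite <- (zval_pad_unit s (S m)) in Hpre by lia. fold c in Hpre.
  specialize (Hm0 m ltac:(lia)).
  assert (HK : INR (K k) <= INR (zval_pad b (S m)) + INR (zval_pad c (S m)))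
    by (rewrite <- plus_INR; apply le_INR; lia).
  pose proof (zeck_coord_le (S m) _ _ HK). unfold t. rewrite EM. lra.
Qed.

Variable g : R -> R.
Hypothesis g0 : g 0 = 0.
Hypothesis g1 : g 1 = 1.
Hypothesis g_cont : cont_on unit_int g.
Hypothesis g_incr : strict_incr_on unit_int g.
Hypothesis g_lb_lim : forall mu, Fstar mu -> mu 0%nat = true ->
  exists L : nat -> R,
    (forall s, is_lim_seq (density_seq (fun k => lb_le mu s (K k))) (L s)) /\
    is_lim_seq L (g (phi * (dotF mu - 1))).

Lemma density_coord_upper l alpha : hd false l = true -> nocons l = true ->
  alpha < phi * (wval l - 1) -> forall eps, 0 < eps ->
  exists N, forall n, (N <= n)%nat ->
    density_seq (fun k => t k <= alpha) n < g (phi * (wval l - 1)) + eps.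
Proof.
  intros Hhd Hl Ha eps He.
  assert (H0 : pad_seq l 0 = true) by (destruct l; [discriminate|exact Hhd]).
  destruct (g_lb_lim (pad_seq l) (pad_seq_Fstar l Hl) H0) as [L [HL HLlim]].
  rewrite dotF_pad_seq in HLlim.
  destruct (is_lim_seq_eventually_lt L _ (g (phi * (wval l - 1)) + eps / 2) HLlim ltac:(lra))
    as [s0 Hs0].
  set (s := max s0 (length l)).
  destruct (lb_le_of_coord_le l s alpha Hl ltac:(lia) Ha) as [k0 Hk0].
  destruct (density_seq_upper_impl _ _ k0 (L s) Hk0 (HL s) (eps / 2) ltac:(lra)) as [N HN].
  exists N. intros n Hn. specialize (HN n Hn). specialize (Hs0 s ltac:(lia)). lra.
Qed.

Lemma density_coord_lower l alpha : hd false l = true -> nocons l = true ->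
  phi * (wval l - 1) < alpha -> forall eps, 0 < eps ->
  exists N, forall n, (N <= n)%nat ->
    g (phi * (wval l - 1)) - eps < density_seq (fun k => t k <= alpha) n.
Proof.
  intros Hhd Hl Ha eps He. pose proof phi_bounds as Hpb. pose proof omega_bounds as Hob.
  set (y := phi * (wval l - 1)) in *.
  assert (H0 : pad_seq l 0 = true) by (destruct l; [discriminate|exact Hhd]).
  destruct (g_lb_lim (pad_seq l) (pad_seq_Fstar l Hl) H0) as [L [HL HLlim]].
  rewrite dotF_pad_seq in HLlim. fold y in HLlim.
  destruct (is_lim_seq_eventually_gt L _ (g y - eps / 2) HLlim ltac:(lra)) as [s0 Hs0].
  destruct (is_lim_seq_eventually_lt (pow omega) 0 ((alpha - y) / phi))
    as [s1 Hs1]; [apply is_lim_seq_geom; rewrite Rabs_right; lra|apply Rdiv_lt_0_compat; lra|].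
  set (s := S (max s1 (max s0 (length l)))).
  assert (Hpow : phi * omega ^ (s - 1) < alpha - y).
  { specialize (Hs1 (s - 1)%nat ltac:(lia)). apply (Rmult_lt_compat_l phi) in Hs1; [|lra].
    replace (phi * ((alpha - y) / phi)) with (alpha - y) in Hs1 by (field; lra). exact Hs1. }
  destruct (coord_le_of_lb_le l s alpha Hl ltac:(lia) ltac:(lia) ltac:(fold y; lra)) as [k0 Hk0].
  destruct (density_seq_lower_impl _ _ k0 (L s) Hk0 (HL s) (eps / 2) ltac:(lra)) as [N HN].
  exists N. intros n Hn. specialize (HN n Hn). specialize (Hs0 s ltac:(lia)). lra.
Qed.

Lemma density_coord_lim alpha : unit_int alpha ->
  is_lim_seq (density_seq (fun k => t k <= alpha)) (g alpha).
Proof.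
  intros Ha. apply is_lim_seq_of_bounds; intros eps He;
    destruct (g_cont alpha Ha (eps / 2) ltac:(lra)) as [d [Hd Hc]];
    pose proof (density_seq_bounds (fun k => t k <= alpha)) as Hbd.
  - destruct (Req_dec alpha 1) as [->|Ha1]; [exists 0%nat; intros n _; specialize (Hbd n); lra|].
    destruct (leading_block_between alpha (Rmin 1 (alpha + d))) as [l [Hhd [Hl Hy]]];
      [split; [apply Ha|apply Rmin_glb_lt; unfold unit_int in Ha; lra]|apply Rmin_l|].
    pose proof (Rmin_l 1 (alpha + d)). pose proof (Rmin_r 1 (alpha + d)).
    specialize (Hc (phi * (wval l - 1)) ltac:(unfold unit_int in *; lra)
                  ltac:(apply Rabs_lt_between; lra)).
    apply Rabs_lt_between in Hc.
    destruct (density_coord_upper l alpha Hhd Hl (proj1 Hy) (eps / 2) ltac:(lra)) as [N HN].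
    exists N. intros n Hn. specialize (HN n Hn). lra.
  - destruct (Req_dec alpha 0) as [->|Ha0]; [exists 0%nat; intros n _; specialize (Hbd n); lra|].
    destruct (leading_block_between (Rmax 0 (alpha - d)) alpha) as [l [Hhd [Hl Hy]]];
      [split; [apply Rmax_l|apply Rmax_lub_lt; unfold unit_int in Ha; lra]|apply Ha|].
    pose proof (Rmax_l 0 (alpha - d)). pose proof (Rmax_r 0 (alpha - d)).
    specialize (Hc (phi * (wval l - 1)) ltac:(unfold unit_int in *; lra)
                  ltac:(apply Rabs_lt_between; lra)).
    apply Rabs_lt_between in Hc.
    destruct (density_coord_lower l alpha Hhd Hl (proj2 Hy) (eps / 2) ltac:(lra)) as [N HN].
    exists N. intros n Hn. specialize (HN n Hn). lra.
Qed.

Lemma equidistributed_coords : equidistributed (fun k => INR (M k) + g (t k)).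
Proof.
  intros beta Hb. destruct (incr_onto g g0 g1 g_cont beta Hb) as [a [Ha Hga]].
  apply is_lim_seq_ext with (density_seq (fun k => t k <= a)).
  2:{ rewrite <- Hga. apply density_coord_lim, Ha. }
  intros n. unfold density_seq. do 2 f_equal. apply count_upto_ext. intros k Hk.
  destruct (M_bracket k Hk) as [HM1 HMk].
  assert (Ht : 0 <= t k < 1) by exact (zeck_coord_unit (M k) (K k) HM1 HMk).
  rewrite frac_part_INR_plus by (apply incr_unit_lt1; auto).
  rewrite <- Hga. symmetry. apply incr_le_iff; auto; unfold unit_int; lra.
Qed.

End LeadingBlocks.

Lemma floor_nat x : 1 <= x -> exists m, (1 <= m)%nat /\ INR m <= x < INR m + 1.
Proof.
  intros Hx. destruct (base_Int_part x) as [H1 H2].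
  assert (Hz : (0 < Int_part x)%Z) by (apply lt_IZR; simpl; lra).
  exists (Z.to_nat (Int_part x)). rewrite INR_IZR_INZ, Z2Nat.id by lia. split; [lia|lra].
Qed.

Lemma cont_on_ge1_of_pieces (f : R -> R) :
  (forall m, (1 <= m)%nat -> cont_on (fun x => INR m <= x <= INR m + 1) f) -> cont_on ge1 f.
Proof.
  intros Hpiece x Hx eps He. unfold ge1 in *.
  destruct (floor_nat x Hx) as [m [Hm Hxm]].
  destruct (Hpiece m Hm x ltac:(lra) eps He) as [da [Hda Hca]].
  assert (Hright : exists d, 0 < d /\
                    forall y, x <= y -> Rabs (y - x) < d -> Rabs (f y - f x) < eps).
  { exists (Rmin da (INR m + 1 - x)). split; [apply Rmin_pos; lra|].
    intros y Hy Hyx. pose proof (Rmin_l da (INR m + 1 - x)). pose proof (Rmin_r da (INR m + 1 - x)).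
    apply Rabs_lt_between in Hyx as Hyx'. apply Hca; lra. }
  assert (Hleft : exists d, 0 < d /\ forall y, 1 <= y -> y < x -> Rabs (y - x) < d ->
                    Rabs (f y - f x) < eps).
  { destruct (Rlt_dec (INR m) x) as [Hlt|Hge].
    - exists (Rmin da (x - INR m)). split; [apply Rmin_pos; lra|].
      intros y Hy1 Hy Hyx. pose proof (Rmin_l da (x - INR m)). pose proof (Rmin_r da (x - INR m)).
      apply Rabs_lt_between in Hyx as Hyx'. apply Hca; lra.
    - destruct (Nat.eq_dec m 1) as [->|Hm1]; [exists 1; split; [lra|]; simpl in *; intros; lra|].
      assert (Hprev : INR (m - 1) + 1 = INR m) by (rewrite minus_INR by lia; simpl; ring).
      destruct (Hpiece (m - 1)%nat ltac:(lia) x ltac:(lra) eps He) as [db [Hdb Hcb]].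
      exists (Rmin db 1). split; [apply Rmin_pos; lra|].
      intros y Hy1 Hy Hyx. pose proof (Rmin_l db 1). pose proof (Rmin_r db 1).
      apply Rabs_lt_between in Hyx as Hyx'. apply Hcb; lra. }
  destruct Hright as [dR [HdR HR]], Hleft as [dL [HdL HL]].
  exists (Rmin dR dL). split; [apply Rmin_pos; auto|].
  intros y Hy Hyx. pose proof (Rmin_l dR dL). pose proof (Rmin_r dR dL).
  destruct (Rlt_or_le y x); [apply HL|apply HR]; auto; lra.
Qed.

Definition fib_interp (h : R -> R) (x : R) : R :=
  let n := Z.to_nat (Int_part x) in
  INR (fib n) + INR (fib (n - 1)) * h (x - INR n).

Section FibInterpolation.

Variable h : R -> R.
Hypothesis h0 : h 0 = 0.
Hypothesis h1 : h 1 = 1.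
Hypothesis h_unit : forall p, unit_int p -> unit_int (h p).
Hypothesis h_incr : strict_incr_on unit_int h.
Hypothesis h_cont : cont_on unit_int h.

Lemma fib_interp_piece m x : (1 <= m)%nat -> INR m <= x <= INR m + 1 ->
  fib_interp h x = INR (fib m) + INR (fib (m - 1)) * h (x - INR m).
Proof.
  intros Hm Hx. unfold fib_interp.
  destruct (Req_dec x (INR m + 1)) as [->|Hne].
  - rewrite <- S_INR, <- (Rplus_0_r (INR (S m))), Int_part_INR_plus, Nat2Z.id by lra.
    rewrite S_INR. replace (INR m + 1 + 0 - (INR m + 1)) with 0 by ring.
    replace (INR m + 1 + 0 - INR m) with 1 by ring.
    rewrite h0, h1, fib_S, plus_INR by lia. replace (S m - 1)%nat with m by lia. ring.
  - replace (Int_part x) with (Z.of_nat m).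
    + rewrite Nat2Z.id. reflexivity.
    + replace x with (INR m + (x - INR m)) by ring. symmetry. apply Int_part_INR_plus. lra.
Qed.

Lemma fib_interp_nat n : (1 <= n)%nat -> fib_interp h (INR n) = INR (fib n).
Proof.
  intros Hn. rewrite (fib_interp_piece n) by (auto; lra).
  rewrite Rminus_diag, h0. ring.
Qed.

Lemma fn_fib_interp n p : (1 <= n)%nat -> unit_int p -> fn (fib_interp h) n p = h p.
Proof.
  intros Hn Hp. unfold fn, unit_int in *. pose proof (INR_fib_ge1 (n - 1)).
  rewrite !(fib_interp_piece n) by (auto; lra).
  replace (INR n + p - INR n) with p by ring. replace (INR n + 1 - INR n) with 1 by ring.
  rewrite Rminus_diag, h0, h1. field. lra.
Qed.

Lemma fib_interp_zeck_coord M m p : (1 <= M)%nat -> unit_int p -> h p = zeck_coord M (INR m) ->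
  fib_interp h (INR M + p) = INR m.
Proof.
  intros HM Hp Hhp. unfold unit_int in Hp.
  rewrite (fib_interp_piece M) by (auto; lra).
  replace (INR M + p - INR M) with p by ring. rewrite Hhp. apply zeck_coord_inv.
Qed.

Lemma fib_interp_incr : strict_incr_on ge1 (fib_interp h).
Proof.
  intros x y Hx Hy Hxy. unfold ge1 in *.
  destruct (floor_nat x Hx) as [a [Ha Hxa]], (floor_nat y Hy) as [b [Hb Hyb]].
  rewrite (fib_interp_piece a x), (fib_interp_piece b y) by (auto; lra).
  pose proof (INR_fib_ge1 (a - 1)). pose proof (INR_fib_ge1 (b - 1)).
  destruct (Nat.lt_trichotomy a b) as [Hab|[<-|Hab]].
  - assert (Hhx : h (x - INR a) < 1) by (rewrite <- h1; apply h_incr; unfold unit_int; lra).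
    pose proof (le_INR _ _ (fib_le (S a) b Hab)) as Hfab.
    rewrite fib_S, plus_INR in Hfab by lia.
    pose proof (h_unit (y - INR b) ltac:(unfold unit_int; lra)) as [Hhy _]. nra.
  - assert (h (x - INR a) < h (y - INR a)) by (apply h_incr; unfold unit_int; lra). nra.
  - pose proof (le_INR _ _ Hab). rewrite S_INR in *. lra.
Qed.

Lemma fib_interp_cont : cont_on ge1 (fib_interp h).
Proof.
  apply cont_on_ge1_of_pieces. intros m Hm x Hx eps He.
  pose proof (INR_fib_ge1 (m - 1)) as HF.
  destruct (h_cont (x - INR m) ltac:(unfold unit_int; lra) (eps / INR (fib (m - 1))))
    as [d [Hd Hc]]; [apply Rdiv_lt_0_compat; lra|].
  exists d. split; [exact Hd|]. intros y Hy Hyx.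
  rewrite (fib_interp_piece m y), (fib_interp_piece m x) by auto.
  specialize (Hc (y - INR m) ltac:(unfold unit_int; lra)
                 ltac:(replace (y - INR m - (x - INR m)) with (y - x) by ring; exact Hyx)).
  replace (INR (fib m) + INR (fib (m - 1)) * h (y - INR m)
           - (INR (fib m) + INR (fib (m - 1)) * h (x - INR m)))
    with (INR (fib (m - 1)) * (h (y - INR m) - h (x - INR m))) by ring.
  rewrite Rabs_mult, (Rabs_right (INR _)) by lra.
  apply Rlt_div_r in Hc; [|lra]. rewrite Rmult_comm. exact Hc.
Qed.

Lemma fib_interp_uniform_continuation : uniform_continuation (fib_interp h) h.
Proof.
  repeat split; auto using fib_interp_incr, fib_interp_cont, fib_interp_nat.
  intros eps Heps. exists 0%nat. intros n p _ Hn Hp.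
  rewrite fn_fib_interp, Rminus_diag, Rabs_R0 by auto. exact Heps.
Qed.

End FibInterpolation.

Theorem theorem5p18 (K : nat -> nat) (g : R -> R) :
  cont_LBD K g ->
  exists f finf : R -> R,
    uniform_continuation f finf /\
    (forall y, 0 <= y <= 1 -> finf (g y) = y) /\
    (forall x, 0 <= x <= 1 -> g (finf x) = x) /\
    exists x : nat -> R,
      (forall n, (1 <= n)%nat -> 1 <= x n /\ f (x n) = INR (K n)) /\
      equidistributed x.
Proof.
  intros [[HKpos HKinf] [_ [g0 [g1 [Hlb [gc gi]]]]]].
  destruct (incr_inverse_exists g g0 g1 gc) as [h Hh].
  pose proof (inverse_of_incr g g0 g1 gi h Hh) as Hhg.
  pose proof (inverse_0 g g0 g1 gi h Hh) as h0.
  pose proof (inverse_1 g g0 g1 gi h Hh) as h1.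
  destruct (zeck_length_exists K HKpos) as [M HM].
  exists (fib_interp h), h. split; [|split; [exact Hhg|split; [apply Hh|]]].
  { apply fib_interp_uniform_continuation; auto.
    - intros p Hp. apply Hh, Hp.
    - apply (inverse_incr g gi h Hh).
    - apply (inverse_cont g gi h Hh). }
  exists (fun k => INR (M k) + g (zeck_coord (M k) (INR (K k)))).
  split; [|apply (equidistributed_coords K M HKinf HM g g0 g1 gc gi Hlb)].
  intros n Hn. destruct (HM n Hn) as [HM1 HMn].
  pose proof (zeck_coord_unit (M n) (K n) HM1 HMn) as Ht.
  pose proof (incr_unit_lt1 g g0 g1 gi _ Ht) as Hgt.
  split; [pose proof (le_INR _ _ HM1); simpl in *; lra|].
  apply fib_interp_zeck_coord; auto; [unfold unit_int; lra|].
  apply Hhg. unfold unit_int. lra.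
Qed.
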